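(* Let $D$ be a BN distribution on $\{0,1\}^n$ with all conditional probabilities in $(0,1)$, whose variable order $1,\dots,n$ is a topological order of the DAG, and let $f:\{0,1\}^n\to\mathbb{R}$. Fix $0\le k\le n$ and $\alpha\in\{0,1\}^k$. For every $u\in\{0,1\}^{n-k}$, letting $Y=(X_{n-k+1},\dots,X_n)$, $$g_\alpha(u)=\mathbb{E}\big[f(uY)\,\phi_{0^{n-k}\alpha}(uY)\;\big|\;(X_1,\dots,X_{n-k})=u\big],$$ where $X\sim D$.
   Context: A Bayesian network (BN) on binary variables $X_1,\dots,X_n$ is a directed acyclic graph on $[n]$ with parent sets $\operatorname{pa}(v)$ and conditional distributions with $P(X_1,\dots,X_n)=\prod_v P(X_v\mid X_{\operatorname{pa}(v)})$. Let $\mu_{v,x_{\operatorname{pa}(v)}}=P(X_v=1\mid X_{\operatorname{pa}(v)}=x_{\operatorname{pa}(v)})$, $\sigma_{v,x_{\operatorname{pa}(v)}}=\sqrt{\mu_{v,x_{\operatorname{pa}(v)}}(1-\mu_{v,x_{\operatorname{pa}(v)}})}$, $\phi_v(x)=(x_v-\mu_{v,x_{\operatorname{pa}(v)}})/\sigma_{v,x_{\operatorname{pa}(v)}}$, $\phi_S=\prod_{v\in S}\phi_v$, and $\hat f_S=\mathbb{E}_D[f(X)\phi_S(X)]$. Sets $S\subseteq[n]$ are identified with strings $\gamma\in\{0,1\}^n$ via $\gamma_i=1\iff i\in S$, and we write $\phi_\gamma,\hat f_\gamma$ accordingly. For $\beta\in\{0,1\}^{n-k}$ and $\alpha\in\{0,1\}^k$,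 $\beta\alpha\in\{0,1\}^n$ is their concatenation ($\beta$ occupies coordinates $1,\dots,n-k$); $0^m$ is the all-zero string of length $m$; for $u\in\{0,1\}^{n-k}$ and $y\in\{0,1\}^k$, $uy\in\{0,1\}^n$ is the concatenated input. Define $g_\alpha(u)=\sum_{\beta\in\{0,1\}^{n-k}}\hat f_{\beta\alpha}\,\phi_{\beta0^k}(u0^k)$ for $u\in\{0,1\}^{n-k}$ (note $\phi_{\beta 0^k}(x)$ depends only on $x_1,\dots,x_{n-k}$ since the order is topological). *)

From HB Require Import structures.
From mathcomp Require Import all_boot all_order all_algebra.
Set Implicit Arguments. Unset Strict Implicit. Unset Printing Implicit Defensive.
Import Order.TTheory GRing.Theory Num.Theory.
Local Open Scope ring_scope.

(* Bit strings of length m: {ffun 'I_m -> bool}; coordinate i (0-based) is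
   coordinate i+1 of the paper. *)
Definition bits (m : nat) := {ffun 'I_m -> bool}.

Definition getb (m : nat) (u : bits m) (j : nat) : bool :=
  if insub j is Some o then u o else false.

Definition catb (n k : nat) (u : bits (n - k)) (y : bits k) : bits n :=
  [ffun i : 'I_n => if (i < n - k)%N then getb u i else getb y (i - (n - k))].

Definition prefixb (n k : nat) (x : bits n) : bits (n - k) :=
  [ffun i : 'I_(n - k) => getb x i].
Definition suffixb (n k : nat) (x : bits n) : bits k :=
  [ffun i : 'I_k => getb x (i + (n - k))].

Definition zerob (m : nat) : bits m := [ffun _ => false].

Section BN.
Variables (R : rcfType) (n : nat).
(* mu v x = mu_{v, x_{pa(v)}} = P(X_v = 1 | X_{pa(v)} = x_{pa(v)}) *)
Variable mu : 'I_n -> bits n -> R.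

Definition is_BN (pa : 'I_n -> {set 'I_n}) : Prop :=
  (forall v j, j \in pa v -> (j < v)%N) /\
  (forall v (x y : bits n), (forall j, j \in pa v -> x j = y j) -> mu v x = mu v y).

Definition BNprob (x : bits n) : R :=
  \prod_(v < n) (if x v then mu v x else 1 - mu v x).

Definition sigmav (v : 'I_n) (x : bits n) : R := Num.sqrt (mu v x * (1 - mu v x)).

Definition phiv (v : 'I_n) (x : bits n) : R :=
  ((x v)%:R - mu v x) / sigmav v x.

Definition phi (gamma : bits n) (x : bits n) : R :=
  \prod_(v < n | gamma v) phiv v x.

Definition fhat (f : bits n -> R) (gamma : bits n) : R :=
  \sum_(x : bits n) BNprob x * (f x * phi gamma x).

Definition condE (h : bits n -> R) (E : pred (bits n)) : R :=
  (\sum_(x : bits n | E x) BNprob x * h x) / (\sum_(x : bits n | E x) BNprob x).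

Definition g_alpha (f : bits n -> R) (k : nat) (alpha : bits k) (u : bits (n - k)) : R :=
  \sum_(beta : bits (n - k))
     fhat f (catb beta alpha) * phi (catb beta (zerob k)) (catb u (zerob k)).
End BN.

From HB Require Import structures.
From mathcomp Require Import all_boot all_order all_algebra.
From mathcomp Require Import zify ring.
Set Implicit Arguments. Unset Strict Implicit. Unset Printing Implicit Defensive.
Import Order.TTheory GRing.Theory Num.Theory.
Local Open Scope ring_scope.

(* Expanding the Fourier coefficients, the sum over beta in g_alpha factorizes:
   sum_beta phi_{beta 0}(x) phi_{beta 0}(u 0) = prod_{v <= n-k} (1 + phi_v(x) phi_v(u 0)).
   For a standardized Bernoulli score, 1 + phi_v(x) phi_v(y) equals
   1 / P(X_v = y_v | pa(v)) when x_v = y_v and 0 otherwise, as long as x and y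
   agree on the parents of v. Walking along the topological order, the product is
   therefore the indicator of "x has prefix u" divided by the product of the first
   n-k conditional factors of u 0, which is P(prefix = u) because the conditional
   factors of the remaining coordinates sum to 1. *)

Lemma getb_ord m (u : bits m) (i : 'I_m) : getb u i = u i.
Proof. by rewrite /getb valK. Qed.

Lemma getb_lt m (u : bits m) j (hj : (j < m)%N) : getb u j = u (Ordinal hj).
Proof. by rewrite /getb insubT. Qed.

Lemma getb_zerob m j : getb (zerob m) j = false.
Proof. by rewrite /getb; case: insub => // o; rewrite ffunE. Qed.

Lemma catb_prefixb_suffixb n k (x : bits n) :
  catb (@prefixb n k x) (@suffixb n k x) = x.
Proof.
apply/ffunP => i; rewrite ffunE; case: ifP => hi.
  by rewrite (getb_lt _ hi) ffunE getb_ord.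
have hik : (i - (n - k) < k)%N by have := ltn_ord i; lia.
by rewrite (getb_lt _ hik) ffunE /= subnK ?getb_ord //; lia.
Qed.

Lemma one_add_mul_normalized_bits (R : rcfType) (c : R) (a b : bool) :
  0 < c < 1 ->
  1 + (a%:R - c) / Num.sqrt (c * (1 - c)) * ((b%:R - c) / Num.sqrt (c * (1 - c))) =
  if a == b then (if b then c else 1 - c)^-1 else 0.
Proof.
case/andP => c_gt0 c_lt1.
have c_neq0 : c != 0 by rewrite gt_eqF.
have c1_neq0 : 1 - c != 0 by rewrite subr_eq0 eq_sym lt_eqF.
rewrite mulf_div -expr2 sqr_sqrtr ?mulr_ge0 ?subr_ge0 ?ltW //.
by case: a; case: b => /=; field; rewrite ?c_neq0 ?c1_neq0 ?mulf_neq0.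
Qed.

Section BayesNet.
Variables (R : rcfType) (n : nat) (mu : 'I_n -> bits n -> R).

Definition cond_factor (v : 'I_n) (x : bits n) : R :=
  if x v then mu v x else 1 - mu v x.

Definition eq_below (t : nat) (x y : bits n) : bool :=
  [forall i : 'I_n, (i < t)%N ==> (x i == y i)].

Lemma eq_belowP t (x y : bits n) :
  reflect (forall i : 'I_n, (i < t)%N -> x i = y i) (eq_below t x y).
Proof.
apply: (iffP forallP) => h i; first by move=> hi; apply/eqP; rewrite (implyP (h i)).
by apply/implyP => /h ->.
Qed.

Lemma eq_below_S (o : 'I_n) (x y : bits n) :
  eq_below o.+1 x y = eq_below o x y && (x o == y o).
Proof.
apply/eq_belowP/andP => [h | [/eq_belowP h /eqP ho] i].
  by split; [apply/eq_belowP => i hi; apply: h; apply: ltnW | rewrite h].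
rewrite ltnS leq_eqVlt => /orP [/eqP/val_inj -> // | /h //].
Qed.

Lemma eq_below_ge t (x y : bits n) : (n <= t)%N -> eq_below t x y = (x == y).
Proof.
move=> hnt; apply/eq_belowP/eqP => [h | -> //]; apply/ffunP => i.
by apply: h; apply: leq_trans hnt.
Qed.

Lemma ord_ltn_eqF (i o : 'I_n) : (i < o)%N -> (i == o) = false.
Proof. by move=> hi; rewrite -(inj_eq val_inj) ltn_eqF. Qed.

Definition setb (x : bits n) (o : 'I_n) (b : bool) : bits n :=
  [ffun i => if i == o then b else x i].

Lemma eq_below_setb (o : 'I_n) b (x y : bits n) :
  eq_below o.+1 y (setb x o b) = eq_below o y x && (y o == b).
Proof.
rewrite eq_below_S ffunE eqxx; congr (_ && _); apply/eq_belowP/eq_belowP => h i hi;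
  by move: (h i hi); rewrite ffunE (ord_ltn_eqF hi).
Qed.

Lemma prod_below_S (F : 'I_n -> R) (o : 'I_n) :
  \prod_(v : 'I_n | (v < o.+1)%N) F v = (\prod_(v : 'I_n | (v < o)%N) F v) * F o.
Proof.
rewrite (bigD1 o) //= mulrC; congr (_ * _); apply: eq_bigl => v.
by rewrite ltnS -(inj_eq val_inj) /= andbC -ltn_neqAle.
Qed.

Lemma prefixb_eq_below k (x : bits n) (u : bits (n - k)) :
  (@prefixb n k x == u) = eq_below (n - k) x (catb u (zerob k)).
Proof.
have hw := leq_subr k n.
apply/eqP/eq_belowP => [<- i hi | h].
  by rewrite !ffunE hi (getb_lt _ hi) ffunE getb_ord.
apply/ffunP => j; rewrite ffunE -[j in getb x j]/(val (widen_ord hw j)) getb_ord.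
by rewrite h //= ffunE /= ltn_ord getb_ord.
Qed.

Lemma phi_catb k (beta : bits (n - k)) (alpha : bits k) (x : bits n) :
  phi mu (catb beta alpha) x =
  phi mu (catb beta (zerob k)) x * phi mu (catb (zerob (n - k)) alpha) x.
Proof.
rewrite /phi (bigID (fun v : 'I_n => (v < n - k)%N)) /=; congr (_ * _);
  by apply: eq_bigl => v; rewrite !ffunE; case: ifP; rewrite ?getb_zerob ?andbT ?andbF.
Qed.

Lemma sum_phi_catb_zerob k (x y : bits n) :
  \sum_(beta : bits (n - k))
     phi mu (catb beta (zerob k)) x * phi mu (catb beta (zerob k)) y =
  \prod_(v : 'I_n | (v < n - k)%N) (1 + phiv mu v x * phiv mu v y).
Proof.
have hw := leq_subr k n.
pose a (i : 'I_(n - k)) := phiv mu (widen_ord hw i) x * phiv mu (widen_ord hw i) y.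
have phi_sq beta : phi mu (catb beta (zerob k)) x * phi mu (catb beta (zerob k)) y =
    \prod_(i < n - k) (if beta i then a i else 1).
  rewrite /phi -big_split /= (eq_bigl (fun v : 'I_n => (v < n - k)%N && getb beta v)).
    by rewrite big_mkcondr (big_ord_narrow hw); apply: eq_bigr => i _; rewrite getb_ord.
  by move=> v; rewrite ffunE; case: ifP; rewrite ?getb_zerob.
rewrite (eq_bigr _ (fun beta _ => phi_sq beta)).
rewrite -(bigA_distr_bigA (fun i (b : bool) => if b then a i else 1)).
by rewrite (big_ord_narrow hw); apply: eq_bigr => i _; rewrite big_bool /= addrC.
Qed.

Lemma g_alphaE f k (alpha : bits k) (u : bits (n - k)) :
  g_alpha mu f alpha u =
  \sum_x BNprob mu x * (f x * phi mu (catb (zerob (n - k)) alpha) x) *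
    \prod_(v : 'I_n | (v < n - k)%N) (1 + phiv mu v x * phiv mu v (catb u (zerob k))).
Proof.
rewrite /g_alpha /fhat; under eq_bigr do rewrite mulr_suml.
rewrite exchange_big /=; apply: eq_bigr => x _.
rewrite -sum_phi_catb_zerob mulr_sumr; apply: eq_bigr => beta _.
by rewrite phi_catb; ring.
Qed.

Variable pa : 'I_n -> {set 'I_n}.
Hypothesis hBN : is_BN mu pa.

Lemma mu_eq_below (v : 'I_n) (x y : bits n) : eq_below v x y -> mu v x = mu v y.
Proof.
case: hBN => pa_lt mu_pa /eq_belowP hxy.
by apply: mu_pa => j /pa_lt; apply: hxy.
Qed.

Lemma cond_factor_eq_below (v : 'I_n) (x y : bits n) :
  eq_below v.+1 x y -> cond_factor v x = cond_factor v y.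
Proof.
by rewrite eq_below_S => /andP [/mu_eq_below hmu /eqP hv]; rewrite /cond_factor hv hmu.
Qed.

Lemma cond_factor_setb (o : 'I_n) b (x : bits n) :
  cond_factor o (setb x o b) = if b then mu o x else 1 - mu o x.
Proof.
rewrite /cond_factor.
have -> : mu o (setb x o b) = mu o x.
  by apply/mu_eq_below/eq_belowP => i hi; rewrite ffunE (ord_ltn_eqF hi).
by rewrite ffunE eqxx.
Qed.

Lemma sum_tail_factors t (x : bits n) :
  \sum_(y | eq_below t y x) \prod_(v : 'I_n | (t <= v)%N) cond_factor v y = 1.
Proof.
move Hd: (n - t)%N => d; elim: d t x Hd => [|d IH] t x Hd.
  have hnt : (n <= t)%N by lia.
  rewrite (eq_bigl (pred1 x)) => [|y]; last by rewrite /= eq_below_ge.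
  by rewrite big_pred1_eq big_pred0 // => v; rewrite leqNgt (leq_trans (ltn_ord v) hnt).
have ht : (t < n)%N by lia.
pose o := Ordinal ht.
have sum_at b : \sum_(y | eq_below t y x && (y o == b))
    \prod_(v : 'I_n | (t <= v)%N) cond_factor v y = if b then mu o x else 1 - mu o x.
  rewrite -(cond_factor_setb o b x) (eq_bigl _ _ (fun y => esym (eq_below_setb o b x y))).
  rewrite (eq_bigr (fun y => cond_factor o (setb x o b) *
      \prod_(v : 'I_n | (t.+1 <= v)%N) cond_factor v y)) => [|y hy].
    by rewrite -mulr_sumr IH ?mulr1 //=; lia.
  rewrite (bigD1 o) ?leqnn //= (cond_factor_eq_below hy); congr (_ * _).
  by apply: eq_bigl => v; rewrite ltn_neqAle andbC -(inj_eq val_inj) eq_sym.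
rewrite (bigID (fun y : bits n => y o)) -[RHS](subrK (mu o x)) addrC.
have := sum_at true; have := sum_at false => /= <- <-.
by congr (_ + _); apply: eq_bigl => y; rewrite ?eqb_id ?eqbF_neg.
Qed.

Lemma prob_eq_below t (x : bits n) :
  \sum_(y | eq_below t y x) BNprob mu y = \prod_(v : 'I_n | (v < t)%N) cond_factor v x.
Proof.
rewrite (eq_bigr (fun y => \prod_(v : 'I_n | (v < t)%N) cond_factor v x *
    \prod_(v : 'I_n | (t <= v)%N) cond_factor v y)) => [|y hy].
  by rewrite -mulr_sumr sum_tail_factors mulr1.
rewrite /BNprob (bigID (fun v : 'I_n => (v < t)%N)) /=; congr (_ * _).
  apply: eq_bigr => v hv; apply: cond_factor_eq_below.
  by apply/eq_belowP => i hi; move/eq_belowP: hy; apply; apply: leq_trans hi hv.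
by apply: eq_bigl => v; rewrite -leqNgt.
Qed.

Hypothesis hmu : forall v x, 0 < mu v x < 1.

Lemma one_add_phiv_mul (v : 'I_n) (x y : bits n) : eq_below v x y ->
  1 + phiv mu v x * phiv mu v y = if x v == y v then (cond_factor v y)^-1 else 0.
Proof. by move/mu_eq_below => hxy; rewrite /phiv /sigmav hxy one_add_mul_normalized_bits. Qed.

Lemma prod_one_add_phiv_mul t (x y : bits n) : (t <= n)%N ->
  \prod_(v : 'I_n | (v < t)%N) (1 + phiv mu v x * phiv mu v y) =
  if eq_below t x y then (\prod_(v : 'I_n | (v < t)%N) cond_factor v y)^-1 else 0.
Proof.
elim: t => [_|t IH ht].
  have -> : eq_below 0 x y by apply/eq_belowP.
  by rewrite !big_pred0 // invr1.
pose o := Ordinal ht.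
rewrite -[t.+1]/(o.+1) !prod_below_S eq_below_S IH; last exact: ltnW.
case: ifP => hxy /=; last by rewrite mul0r.
by rewrite one_add_phiv_mul //; case: eqP; rewrite ?mulr0 // invfM.
Qed.

End BayesNet.

Theorem mainTheorem2 (R : rcfType) (n : nat) (pa : 'I_n -> {set 'I_n})
    (mu : 'I_n -> bits n -> R)
    (hBN : is_BN mu pa)
    (hmu : forall v x, 0 < mu v x < 1)
    (f : bits n -> R) (k : nat) (hk : (k <= n)%N) (alpha : bits k)
    (u : bits (n - k)) :
  g_alpha mu f alpha u =
  condE mu
    (fun x => f (catb u (@suffixb n k x)) *
              phi mu (catb (zerob (n - k)) alpha) (catb u (@suffixb n k x)))
    (fun x => @prefixb n k x == u).
Proof.
rewrite g_alphaE /condE.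
rewrite [in RHS](eq_bigr (fun x =>
    BNprob mu x * (f x * phi mu (catb (zerob (n - k)) alpha) x)));
  last by move=> x /eqP <-; rewrite catb_prefixb_suffixb.
rewrite !(eq_bigl _ _ (fun x => @prefixb_eq_below n k x u)) (prob_eq_below hBN) mulr_suml.
rewrite [RHS]big_mkcond; apply: eq_bigr => x _.
by rewrite (prod_one_add_phiv_mul hBN hmu) ?leq_subr //; case: ifP; rewrite ?mulr0.
Qed.
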